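(* Let $(X,d,\mu)$, $p$, $\underline{Q}_\mu$ be as in the context. Fix $\underline{\theta}\in[0,\min\{p,\underline{Q}_\mu\})$, $\theta\in[\underline{\theta},p)$, an integer $N\ge2$, numbers $0\le\theta_1<\dots<\theta_N=\underline{\theta}$, closed sets $S^i\in\mathcal{ADR}_{\theta_i}(X)$, and $\mathfrak m_k:=\sum_{i=1}^N2^{k(\theta-\theta_i)}\mathcal H_{\theta_i}\lfloor_{S^i}$, $k\in\mathbb N_0$. Then for each $c\ge1$ there is a constant $C>0$ such that for each $i\in\{1,\dots,N\}$ and each $k\in\mathbb N_0$ the following holds: if $\underline x\in X$ and $x\in S^i$ satisfy $B_k(x)\subset cB_k(\underline x)$, then $$2^{k(\theta-\theta_i)}\mathcal H_{\theta_i}(cB_k(\underline x)\cap S^i)\le\mathfrak m_k(cB_k(\underline x))\le C2^{k(\theta-\theta_i)}\mathcal H_{\theta_i}(B_k(x)\cap S^i).$$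
   Context: Standing setting: $(X,d)$ complete separable metric space, $\mu$ a Borel regular locally finite outer measure, $\operatorname{supp}\mu=X$, uniformly locally doubling (for every $R>0$, $\sup_{r\in(0,R]}\sup_x\mu(B_{2r}(x))/\mu(B_r(x))<\infty$). Balls are closed, $B_r(x)=\{y:d(x,y)\le r\}$, $cB_r(x)=B_{cr}(x)$, $B_k(x)=B_{2^{-k}}(x)$. A fixed $p\in(1,\infty)$; $X$ supports a weak local $(1,p)$-Poincaré inequality (for every $R>0$ there are $C,\lambda\ge1$ with $\inf_c\frac{1}{\mu(B_r(x))}\int_{B_r(x)}|f-c|d\mu\le Cr(\frac{1}{\mu(B_{\lambda r}(x))}\int_{B_{\lambda r}(x)}(\operatorname{lip}f)^pd\mu)^{1/p}$ for Lipschitz $f$, $x\in X$, $r\in(0,R]$). $\underline{Q}_\mu$ is the infimum of $Q>0$ such that for every $R>0$ there is $C$ with $(r_{B'}/r_B)^Q\le C\mu(B')/\mu(B)$ for balls $B'\subset B$, $0<r_{B'}\le r_B\le R$. $\mathcal H_{\vartheta,\delta}(E):=\inf\{\sum\mu(B_{r_i}(x_i))r_i^{-\vartheta}:E\subset\bigcup B_{r_i}(x_i),0<r_i<\delta\}$, $\mathcal H_\vartheta=\lim_{\delta\to0}\mathcal H_{\vartheta,\delta}$; $\mathfrak m\lfloor_S(E)=\mathfrak m(E\cap S)$. $\mathcal{ADR}_\vartheta(X)$: closed $S'$ with $\varkappa_1\mu(B_r(x))r^{-\vartheta}\le\mathcal H_\vartheta(B_r(x)\cap S')\le\varkappa_2\mu(B_r(x))r^{-\vartheta}$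 for $x\in S'$, $r\in(0,1]$. *)

From HB Require Import structures.
From mathcomp Require Import all_boot all_order all_algebra.
From mathcomp Require Import all_classical all_reals all_analysis.
Set Implicit Arguments. Unset Strict Implicit. Unset Printing Implicit Defensive.
Import Order.TTheory GRing.Theory Num.Theory.
Import numFieldNormedType.Exports.
Local Open Scope classical_set_scope.
Local Open Scope ring_scope.

Section MetricMeasure.
Variables (R : realType) (X : pointedType) (d : X -> X -> R).

Definition is_metric : Prop :=
  [/\ forall x y, 0 <= d x y, forall x y, d x y = 0 <-> x = y,
      forall x y, d x y = d y x
    & forall x y z, d x z <= d x y + d y z].

Definition cball (x : X) (r : R) : set X := [set y | d x y <= r].
(** open ball, only used to define the topology *)
Definition oball (x : X) (r : R) : set X := [set y | d x y < r].

Definition dopen (U : set X) : Prop :=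
  forall x, U x -> exists2 r, 0 < r & oball x r `<=` U.
Definition dclosed (F : set X) : Prop := dopen (~` F).

Definition borel_sets : set (set X) := <<s dopen >>.

Definition complete_metric : Prop :=
  forall u : nat -> X,
    (forall e, 0 < e -> exists M, forall m n, (M <= m)%N -> (M <= n)%N ->
        d (u m) (u n) < e) ->
    exists l, forall e, 0 < e -> exists M, forall n, (M <= n)%N -> d (u n) l < e.

Definition separable_metric : Prop :=
  exists D : set X, countable D /\
    forall x e, 0 < e -> exists2 y, D y & d x y < e.

Variable mu : {outer_measure set X -> \bar R}.

Definition borel_regular : Prop :=
  (forall B, borel_sets B -> mu.-caratheodory B) /\
  (forall A, exists B, [/\ borel_sets B, A `<=` B & mu A = mu B]).

Definition locally_finite : Prop :=
  forall x, exists2 r, 0 < r & (mu (cball x r) < +oo)%E.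

(** supp mu = X : every ball of positive radius has positive measure *)
Definition full_support : Prop :=
  forall x r, 0 < r -> (0 < mu (cball x r))%E.

Definition unif_loc_doubling : Prop :=
  forall R0, 0 < R0 -> exists C : R, forall x r, 0 < r -> r <= R0 ->
    (mu (cball x (2 * r)) <= C%:E * mu (cball x r))%E.

Definition standing_assumptions : Prop :=
  [/\ is_metric, complete_metric, separable_metric, borel_regular
    & [/\ locally_finite, full_support & unif_loc_doubling]].

(** integration with respect to mu (restricted to its Caratheodory sets,
    which contain the Borel sets by Borel regularity) *)
Definition mu_int (D : set X) (f : X -> \bar R) : \bar R :=
  \int[(mu : set (caratheodory_type mu) -> \bar R)]_(x in D) f x.

Definition lipschitz (f : X -> R) : Prop :=
  exists L : R, forall x y, `|f x - f y| <= L * d x y.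

(** pointwise lower Lipschitz constant
    lip f(x) = liminf_{r -> 0+} sup_{y in B_r(x)} |f y - f x| / r *)
Definition lip (f : X -> R) (x : X) : \bar R :=
  ereal_sup [set ereal_inf
      [set ereal_sup [set ((`|f y - f x|) / r)%:E | y in cball x r]
        | r in [set r : R | 0 < r < delta]]
    | delta in [set delta : R | 0 < delta]].

Definition poincare (p : R) : Prop :=
  forall R0, 0 < R0 -> exists C lam : R, [/\ 1 <= C, 1 <= lam &
    forall f, lipschitz f -> forall x r, 0 < r -> r <= R0 ->
      (ereal_inf [set ((fine (mu (cball x r)))^-1)%:E *
                        mu_int (cball x r) (fun y => (`|f y - c|)%:E)
                   | c in [set: R]]
       <= (C * r)%:E *
          poweR (((fine (mu (cball x (lam * r))))^-1)%:E *
                 mu_int (cball x (lam * r)) (fun y => poweR (lip f y) p))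
                (p^-1))%E].

(** lower mass exponent Q_mu (infimum, +oo if the set is empty) *)
Definition Qset : set R :=
  [set Q : R | 0 < Q /\ forall R0, 0 < R0 -> exists C : R,
     forall x x' r r', 0 < r' -> r' <= r -> r <= R0 ->
       cball x' r' `<=` cball x r ->
       powR (r' / r) Q <= C * (fine (mu (cball x' r')) / fine (mu (cball x r)))].

Definition Q_mu : \bar R := ereal_inf [set Q%:E | Q in Qset].

(** covers by (at most countably many) closed balls of radii in (0,delta):
    a cover is a sequence of optional (center, radius) pairs *)
Definition ball_cover (delta : R) (E : set X) (c : nat -> option (X * R)) : Prop :=
  (forall i xr, c i = Some xr -> 0 < xr.2 < delta) /\
  E `<=` \bigcup_i [set y | exists xr, c i = Some xr /\ d xr.1 y <= xr.2].

Definition cover_weight (theta : R) (c : nat -> option (X * R)) (i : nat) : \bar R :=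
  match c i with
  | Some xr => (mu (cball xr.1 xr.2) * (powR xr.2 (- theta))%:E)%E
  | None => 0%E
  end.

Definition Hcont (theta delta : R) (E : set X) : \bar R :=
  ereal_inf [set (\sum_(i <oo) cover_weight theta c i)%E
             | c in ball_cover delta E].

(** H_theta = lim_{delta -> 0} H_{theta,delta} (= sup over delta > 0,
    since H_{theta,delta} is nonincreasing in delta) *)
Definition Hmeas (theta : R) (E : set X) : \bar R :=
  ereal_sup [set Hcont theta delta E | delta in [set delta : R | 0 < delta]].

Definition ADR (theta : R) (S : set X) : Prop :=
  dclosed S /\ exists k1 k2 : R, 0 < k1 /\
    forall x r, S x -> 0 < r -> r <= 1 ->
      (k1%:E * (mu (cball x r) * (powR r (- theta))%:E)
         <= Hmeas theta (cball x r `&` S)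
       /\ Hmeas theta (cball x r `&` S)
         <= k2%:E * (mu (cball x r) * (powR r (- theta))%:E))%E.

(** m_k(E) = sum_i 2^{k(theta - theta_i)} H_{theta_i}(E cap S^i),
    indices shifted to 0 .. N-1 *)
Definition mk (N : nat) (theta : R) (thi : nat -> R) (S : nat -> set X)
    (k : nat) (E : set X) : \bar R :=
  (\sum_(i < N) (powR 2 (k%:R * (theta - thi i)))%:E * Hmeas (thi i) (E `&` S i))%E.

End MetricMeasure.

From HB Require Import structures.
From mathcomp Require Import all_boot all_order all_algebra.
From mathcomp Require Import all_classical all_reals all_analysis.
From mathcomp Require Import ring lra zify.
Set Implicit Arguments. Unset Strict Implicit. Unset Printing Implicit Defensive.
Import Order.TTheory GRing.Theory Num.Theory.
Local Open Scope classical_set_scope.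
Local Open Scope ring_scope.

(* The lower bound is one of the N nonnegative terms of m_k.  For the upper
   bound every term of m_k(c B_k(xu)) is compared with mu(B_k(x)): if S^j meets
   c B_k(xu) at y, then c B_k(xu) lies in B(y, 2c 2^-k), which lies in
   B(x, 4c 2^-k).  The upper Ahlfors bound for S^j, extended from radii <= 1 to
   radii <= 2c by covering with the unit balls around a maximal 1-separated set
   (whose cardinality doubling bounds), and doubling then give
   2^{k(theta-theta_j)} H_{theta_j}(c B_k(xu) cap S^j) <~ 2^{k theta} mu(B_k(x)).
   The lower Ahlfors bound for S^i at x is the reverse estimate for the i-th
   term. *)

Lemma nneseries_le_ub (R : realType) (u : nat -> \bar R) (M : \bar R) :
  (forall n, (0 <= u n)%E) -> (forall n, (\sum_(0 <= i < n) u i <= M)%E) ->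
  (\sum_(i <oo) u i <= M)%E.
Proof.
move=> u0 uM; apply: lime_le; first by apply: is_cvg_nneseries => n _ _.
exact: nearW.
Qed.

Lemma le_ereal_infD (R : realType) (A B : set \bar R) (z : \bar R) :
  (forall a, A a -> 0 <= a)%E -> (forall b, B b -> 0 <= b)%E ->
  (forall a b, A a -> B b -> z <= a + b)%E ->
  (z <= ereal_inf A + ereal_inf B)%E.
Proof.
move=> A0 B0 hz.
have infA0 : (0 <= ereal_inf A)%E by apply: le_ereal_inf_tmp => a /A0.
have infB0 : (0 <= ereal_inf B)%E by apply: le_ereal_inf_tmp => b /B0.
have [Bfin|] := boolP (ereal_inf B \is a fin_num); last first.
  rewrite ge0_fin_numE // -leNgt leye_eq => /eqP ->.
  by rewrite addey ?leey // gt_eqF // (lt_le_trans _ infA0).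
rewrite -leeBlDr //; apply: le_ereal_inf_tmp => a Aa; rewrite leeBlDr //.
have [afin|] := boolP (a \is a fin_num); last first.
  rewrite ge0_fin_numE ?A0 // -leNgt leye_eq => /eqP ->.
  by rewrite addye ?leey // gt_eqF // (lt_le_trans _ infB0).
rewrite addeC -leeBlDr //; apply: le_ereal_inf_tmp => b Bb.
by rewrite leeBlDr // addeC; exact: hz.
Qed.

Lemma exists_ge_pow2 (R : realType) (a : R) : exists m : nat, a <= 2 ^+ m.
Proof.
case: (lerP a 0) => ha; first by exists 0%N; rewrite expr0; lra.
exists (Num.trunc a).+1; apply/ltW/(lt_le_trans (truncnS_gt a)).
by rewrite -natrX ler_nat ltnW // ltn_expl.
Qed.

Definition interleave {T : Type} (a b : nat -> T) (i : nat) : T :=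
  if odd i then b i./2 else a i./2.

Lemma interleave_double (T : Type) (a b : nat -> T) i :
  interleave a b i.*2 = a i.
Proof. by rewrite /interleave odd_double doubleK. Qed.

Lemma interleave_doubleS (T : Type) (a b : nat -> T) i :
  interleave a b i.*2.+1 = b i.
Proof. by rewrite /interleave /= odd_double /= uphalf_double. Qed.

Section HausdorffContent.
Variables (R : realType) (X : pointedType) (d : X -> X -> R).
Variable mu : {outer_measure set X -> \bar R}.

Lemma cover_weight_ge0 th c i : (0 <= cover_weight d mu th c i)%E.
Proof.
rewrite /cover_weight; case: (c i) => [xr|] //.
by rewrite mule_ge0 ?outer_measure_ge0 // lee_fin powR_ge0.
Qed.

Lemma cover_sum_ge0 th c : (0 <= \sum_(i <oo) cover_weight d mu th c i)%E.
Proof. by apply: nneseries_ge0 => i _ _; exact: cover_weight_ge0. Qed.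

Lemma Hcont_ge0 th de E : (0 <= Hcont d mu th de E)%E.
Proof. by apply: le_ereal_inf_tmp => _ [c _ <-]; exact: cover_sum_ge0. Qed.

Lemma Hcont_le_Hmeas th de E : 0 < de -> (Hcont d mu th de E <= Hmeas d mu th E)%E.
Proof. by move=> de0; apply: ereal_sup_ubound; exists de. Qed.

Lemma Hmeas_ge0 th E : (0 <= Hmeas d mu th E)%E.
Proof. exact: le_trans (Hcont_ge0 th 1 E) (Hcont_le_Hmeas th E ltr01). Qed.

Lemma le_Hmeas th A B : A `<=` B -> (Hmeas d mu th A <= Hmeas d mu th B)%E.
Proof.
move=> AB; apply: ge_ereal_sup => _ [de de0 <-].
apply: le_trans (Hcont_le_Hmeas _ _ de0).
apply: ereal_inf_le_tmp => _ [c [c1 c2] <-]; exists c => //; split => //.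
exact: subset_trans c2.
Qed.

Lemma Hmeas0 th : Hmeas d mu th set0 = 0%E.
Proof.
apply/eqP; rewrite eq_le Hmeas_ge0 andbT.
apply: ge_ereal_sup => _ [de de0 <-]; apply: ereal_inf_lbound.
by exists (fun _ => None); [split | rewrite eseries0].
Qed.

Lemma ball_cover_interleave de A B ca cb :
  ball_cover d de A ca -> ball_cover d de B cb ->
  ball_cover d de (A `|` B) (interleave ca cb).
Proof.
move=> [ca1 ca2] [cb1 cb2]; split.
  by move=> i xr; rewrite /interleave; case: ifP => _; [exact: cb1 | exact: ca1].
move=> y [/ca2 [i _ Hi]|/cb2 [i _ Hi]].
  by exists i.*2; rewrite ?interleave_double.
by exists i.*2.+1; rewrite ?interleave_doubleS.
Qed.

Lemma cover_weight_interleave_sum th ca cb k :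
  (\sum_(0 <= i < k.*2) cover_weight d mu th (interleave ca cb) i =
   \sum_(0 <= i < k) cover_weight d mu th ca i
   + \sum_(0 <= i < k) cover_weight d mu th cb i)%E.
Proof.
elim: k => [|k IH]; first by rewrite double0 !big_geq // adde0.
rewrite doubleS !big_nat_recr //= IH.
rewrite /cover_weight interleave_double interleave_doubleS -/cover_weight.
by rewrite -!addeA; congr (_ + _)%E; rewrite addeCA.
Qed.

Lemma cover_sum_interleave th ca cb :
  (\sum_(i <oo) cover_weight d mu th (interleave ca cb) i
   <= \sum_(i <oo) cover_weight d mu th ca i
      + \sum_(i <oo) cover_weight d mu th cb i)%E.
Proof.
apply: nneseries_le_ub => [i|k]; first exact: cover_weight_ge0.
have kk : (k <= k.*2)%N by rewrite -addnn leq_addr.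
apply: (@le_trans _ _
  (\sum_(0 <= i < k.*2) cover_weight d mu th (interleave ca cb) i)%E).
  rewrite (big_cat_nat _ kk) //= leeDl // sume_ge0 // => i _.
  exact: cover_weight_ge0.
rewrite cover_weight_interleave_sum.
by apply: leeD; apply: nneseries_lim_ge => i _ _; exact: cover_weight_ge0.
Qed.

Lemma HcontU2 th de A B :
  (Hcont d mu th de (A `|` B) <= Hcont d mu th de A + Hcont d mu th de B)%E.
Proof.
apply: le_ereal_infD => [_ [c _ <-]|_ [c _ <-]|_ _ [ca hca <-] [cb hcb <-]];
  try exact: cover_sum_ge0.
apply: le_trans (cover_sum_interleave th ca cb).
apply: ereal_inf_lbound; exists (interleave ca cb) => //.
exact: ball_cover_interleave.
Qed.

Lemma HmeasU2 th A B :
  (Hmeas d mu th (A `|` B) <= Hmeas d mu th A + Hmeas d mu th B)%E.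
Proof.
apply: ge_ereal_sup => _ [de de0 <-]; apply: le_trans (HcontU2 _ _ A B) _.
by apply: leeD; exact: Hcont_le_Hmeas.
Qed.

Lemma Hmeas_cover_le th (A : nat -> set X) n E :
  E `<=` [set y | exists2 l, (l < n)%N & A l y] ->
  (Hmeas d mu th E <= \sum_(l < n) Hmeas d mu th (A l))%E.
Proof.
elim: n E => [|n IH] E hE.
  by rewrite big_ord0 -(Hmeas0 th) le_Hmeas // => y /hE [].
rewrite big_ord_recr /=.
have hE' : E `<=` [set y | exists2 l, (l < n)%N & A l y] `|` A n.
  move=> y /hE [l]; rewrite ltnS leq_eqVlt => /orP [/eqP -> | hl] hy.
    by right.
  by left; exists l.
apply: le_trans (le_Hmeas th hE') _; apply: le_trans (HmeasU2 _ _ _) _.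
by apply: leeD => //; exact: IH.
Qed.

End HausdorffContent.

Definition dist_separated {R : realType} {X : Type} (d : X -> X -> R)
    (e : R) (f : nat -> X) (n : nat) : Prop :=
  forall l l', (l < l')%N -> (l' < n)%N -> e < d (f l) (f l').

Section MetricBalls.
Variables (R : realType) (X : pointedType) (d : X -> X -> R).

Lemma le_cball x r s : r <= s -> cball d x r `<=` cball d x s.
Proof. by move=> rs y /= /le_trans; apply. Qed.

Lemma maximal_separated_net (e K : R) (A : set X) :
  (forall f n, (forall l, (l < n)%N -> A (f l)) -> dist_separated d e f n ->
     n%:R <= K) ->
  exists f n, [/\ forall l, (l < n)%N -> A (f l), dist_separated d e f n &
     forall z, A z -> exists2 l, (l < n)%N & d (f l) z <= e].
Proof.
move=> hK.
pose P n := `[< exists f, (forall l, (l < n)%N -> A (f l)) /\ dist_separated d e f n >].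
have P0 : P 0%N by apply/asboolP; exists (fun=> point); split.
have K0 : 0 <= K by apply: (hK (fun=> point) 0%N) => // l; rewrite ltn0.
have P_le n : P n -> (n <= Num.trunc K)%N.
  by move=> /asboolP [f [fA fsep]]; rewrite truncn_ge_nat // (hK f).
case: (ex_maxnP (ex_intro P 0%N P0) P_le) => n /asboolP [f [fA fsep]] nmax.
exists f, n; split => // z Az; apply: contrapT => far.
suff /nmax : P n.+1 by rewrite ltnn.
apply/asboolP; exists (fun l => if l == n then z else f l); split.
  by move=> l; rewrite ltnS leq_eqVlt; case: eqP => // _ /= /fA.
move=> l l' ll' l'n; rewrite ifN_eq; last by apply/eqP; lia.
case: eqP => [l'E|l'n'].
  by rewrite ltNge; apply/negP => fz; apply: far; exists l => //; lia.
by apply: fsep => //; lia.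
Qed.

Hypothesis hmet : is_metric d.

Lemma distC x y : d x y = d y x.
Proof. by case: hmet. Qed.

Lemma dist_triangle x y z : d x z <= d x y + d y z.
Proof. by case: hmet. Qed.

Lemma dist_xx x : d x x = 0.
Proof. by case: hmet => _ h _ _; apply/h. Qed.

Lemma cball_center x r : 0 <= r -> cball d x r x.
Proof. by rewrite /cball /= dist_xx. Qed.

Lemma cball_sub x y r s : d y x + r <= s -> cball d x r `<=` cball d y s.
Proof. by move=> h z; rewrite /cball /= => xz; have := dist_triangle y x z; lra. Qed.

Lemma dclosed_cball x r : dclosed d (cball d x r).
Proof.
move=> z /= /negP; rewrite -ltNge => rz; exists (d x z - r); first by rewrite subr_gt0.
move=> w; rewrite /oball /cball /= => zw xw.
by have := dist_triangle x w z; rewrite (distC w z); lra.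
Qed.

End MetricBalls.

Section Doubling.
Variables (R : realType) (X : pointedType) (d : X -> X -> R).
Variable mu : {outer_measure set X -> \bar R}.

Lemma doubling_iter (R1 Cd : R) : 0 <= Cd ->
  (forall x r, 0 < r -> r <= R1 ->
     (mu (cball d x (2 * r)) <= Cd%:E * mu (cball d x r))%E) ->
  forall m x s, 0 < s -> 2 ^+ m * s <= R1 ->
  (mu (cball d x (2 ^+ m * s)) <= (Cd ^+ m)%:E * mu (cball d x s))%E.
Proof.
move=> Cd0 hD; elim => [|m IH] x s s0 hs; first by rewrite !expr0 mul1r mul1e.
have ms0 : 0 < 2 ^+ m * s by rewrite mulr_gt0 // exprn_gt0.
have msR : 2 ^+ m * s <= R1 by apply: le_trans hs; rewrite exprS -mulrA; lra.
rewrite exprS -mulrA; apply: le_trans (hD x _ ms0 msR) _.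
by rewrite exprS EFinM -muleA lee_wpmul2l ?lee_fin // IH.
Qed.

Hypothesis hdbl : unif_loc_doubling d mu.

Lemma doubling_scale (lam R0 : R) : 0 < R0 ->
  exists2 D : R, 1 <= D & forall x r s, 0 < r -> r <= R0 -> s <= lam * r ->
    (mu (cball d x s) <= D%:E * mu (cball d x r))%E.
Proof.
move=> R00; have [M lamM] := exists_ge_pow2 lam.
have [C hC] := hdbl (mulr_gt0 (exprn_gt0 M (ltr0Sn R 1)) R00).
pose Cd := Num.max C 1; have Cd1 : 1 <= Cd by rewrite le_max lexx orbT.
exists (Cd ^+ M); first exact: exprn_ege1.
move=> x r s r0 rR0 slam.
apply: le_trans (le_outer_measure mu _ (cball d x (2 ^+ M * r)) _) _.
  by apply: le_cball; apply: le_trans slam _; rewrite ler_pM2r.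
apply: (doubling_iter (R1 := 2 ^+ M * R0)) => //; first by apply: le_trans Cd1.
  move=> y t t0 tR; apply: le_trans (hC y t t0 tR) _.
  by rewrite lee_wpmul2r ?outer_measure_ge0 // lee_fin le_max lexx.
by rewrite ler_pM2l // exprn_gt0.
Qed.

Lemma cball_fin : locally_finite d mu -> forall x r, (mu (cball d x r) < +oo)%E.
Proof.
move=> hlf x r; have [r0 r00 finr0] := hlf x.
have [D _ hD] := doubling_scale (r / r0) r00.
apply: le_lt_trans (hD x r0 r r00 (lexx _) _) _; first by rewrite mulfVK ?gt_eqF.
move: finr0; rewrite -ge0_fin_numE ?outer_measure_ge0 // => /fineK <-.
by rewrite -EFinM ltry.
Qed.

End Doubling.

Section BallMeasure.
Variables (R : realType) (X : pointedType) (d : X -> X -> R).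
Variable mu : {outer_measure set X -> \bar R}.

Lemma sum_disjoint_caratheodory_le (f : nat -> set X) n E :
  (forall l, (l < n)%N -> mu.-caratheodory (f l)) ->
  (forall l l' z, (l < l')%N -> (l' < n)%N -> f l z -> f l' z -> False) ->
  (forall l, (l < n)%N -> f l `<=` E) ->
  (\sum_(l < n) mu (f l) <= mu E)%E.
Proof.
elim: n E => [|n IH] E fC fdisj fE; first by rewrite big_ord0 outer_measure_ge0.
rewrite big_ord_recr /= (fC n (ltnSn n) E) addeC (setIidr (fE n _)) //.
apply: leeD => //; apply: IH => [l ln|l l' z ll' l'n|l ln z fz].
- exact/fC/ltnW.
- exact/fdisj/ltnW.
- by split; [exact: (fE l (ltnW ln)) | exact: fdisj fz].
Qed.

Hypothesis hmet : is_metric d.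
Hypothesis hB : borel_regular d mu.

Lemma cball_caratheodory x r : mu.-caratheodory (cball d x r).
Proof.
apply: hB.1; rewrite -[cball _ _ _]setCK.
by apply: sigma_algebraC; apply: sub_sigma_algebra; exact: dclosed_cball.
Qed.

Hypothesis hfin : forall x r, (mu (cball d x r) < +oo)%E.
Hypothesis hsupp : full_support d mu.

Lemma mu_cballE x r : mu (cball d x r) = (fine (mu (cball d x r)))%:E.
Proof. by rewrite fineK // ge0_fin_numE // outer_measure_ge0. Qed.

Lemma fine_mu_cball_gt0 x r : 0 < r -> 0 < fine (mu (cball d x r)).
Proof. by move=> r0; rewrite -lte_fin -mu_cballE; exact: hsupp. Qed.

(* The balls B(f l, e/2) are disjoint, lie in B(y, rho + e/2), and each has
   mass at least mu(B(y, rho + e/2)) / K. *)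
Lemma separated_card_le (e K rho : R) y f n : 0 < e -> 0 < rho ->
  (forall z, d y z <= rho ->
     (mu (cball d y (rho + e / 2)) <= K%:E * mu (cball d z (e / 2)))%E) ->
  (forall l, (l < n)%N -> d y (f l) <= rho) -> dist_separated d e f n ->
  n%:R <= K.
Proof.
move=> e0 rho0 hK fy fsep.
set m := fine (mu (cball d y (rho + e / 2))).
have m0 : 0 < m by apply: fine_mu_cball_gt0; lra.
have K0 : 0 <= K.
  have := hK y; rewrite dist_xx // => /(_ (ltW rho0)).
  rewrite (mu_cballE y (rho + e / 2)) (mu_cballE y (e / 2)) -EFinM lee_fin -/m.
  have : 0 < fine (mu (cball d y (e / 2))) by apply: fine_mu_cball_gt0; lra.
  nra.
have packed : \sum_(l < n) fine (mu (cball d (f l) (e / 2))) <= m.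
  rewrite -lee_fin -sumEFin -mu_cballE.
  under eq_bigr do rewrite -mu_cballE.
  apply: (sum_disjoint_caratheodory_le (f := fun l => cball d (f l) (e / 2)))
    => [l _|l l' z ll' l'n|l ln].
  - exact: cball_caratheodory.
  - rewrite /cball /= => lz l'z; have := fsep l l' ll' l'n.
    by have := dist_triangle hmet (f l) z (f l'); rewrite (distC hmet z); lra.
  - by apply: cball_sub => //; have := fy l ln; lra.
have : n%:R * m <= K * m.
  apply: le_trans (ler_wpM2l K0 packed); rewrite mulr_sumr -[n in n%:R]card_ord.
  rewrite -sumr_const mulr_suml; apply: ler_sum => l _; rewrite mul1r.
  by rewrite -lee_fin EFinM -!mu_cballE; exact/hK/fy.
by rewrite ler_pM2r.
Qed.

End BallMeasure.

(* The body of [ADR], so that [ADR d mu th S] unfolds to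
   [dclosed S /\ exists k1 k2, 0 < k1 /\ ADR_bounds d mu th k1 k2 S]. *)
Definition ADR_bounds {R : realType} {X : pointedType} (d : X -> X -> R)
    (mu : {outer_measure set X -> \bar R}) (th k1 k2 : R) (S : set X) : Prop :=
  forall x r, S x -> 0 < r -> r <= 1 ->
    (k1%:E * (mu (cball d x r) * (powR r (- th))%:E)
       <= Hmeas d mu th (cball d x r `&` S)
     /\ Hmeas d mu th (cball d x r `&` S)
       <= k2%:E * (mu (cball d x r) * (powR r (- th))%:E))%E.

Section ADRConstants.
Variables (R : realType) (X : pointedType) (d : X -> X -> R).
Variable mu : {outer_measure set X -> \bar R}.

Lemma ADR_bounds_weaken th k1 k2 k1' k2' S : ADR_bounds d mu th k1 k2 S ->
  k1' <= k1 -> k2 <= k2' -> ADR_bounds d mu th k1' k2' S.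
Proof.
move=> hk k1k k2k x r Sx r0 r1; have [lo up] := hk x r Sx r0 r1.
have w0 : (0 <= mu (cball d x r) * (powR r (- th))%:E)%E.
  by rewrite mule_ge0 ?outer_measure_ge0 // lee_fin powR_ge0.
by split; [apply: le_trans lo | apply: le_trans up _]; rewrite lee_wpmul2r ?lee_fin.
Qed.

Lemma ADR_uniform (thi : nat -> R) (S : nat -> set X) N :
  (forall i, (i < N)%N -> ADR d mu (thi i) (S i)) ->
  exists K1 K2, [/\ 0 < K1, 0 <= K2 &
    forall i, (i < N)%N -> ADR_bounds d mu (thi i) K1 K2 (S i)].
Proof.
elim: N => [|N IH] hadr; first by exists 1, 0.
have [K1 [K2 [K1_gt0 K2_ge0 hK]]] := IH (fun i iN => hadr i (ltnW iN)).
have [_ [k1 [k2 [k1_gt0 hk]]]] := hadr N (ltnSn N).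
exists (Num.min K1 k1), (Num.max K2 k2); split; first by rewrite lt_min K1_gt0.
  by rewrite le_max K2_ge0.
move=> i; rewrite ltnS leq_eqVlt => /orP [/eqP -> | iN].
  by apply: (ADR_bounds_weaken hk); rewrite ?ge_min ?le_max lexx ?orbT.
by apply: (ADR_bounds_weaken (hK i iN)); rewrite ?ge_min ?le_max lexx ?orbT.
Qed.

End ADRConstants.

Section ADRUpperExtension.
Variables (R : realType) (X : pointedType) (d : X -> X -> R).
Variable mu : {outer_measure set X -> \bar R}.
Hypotheses (hmet : is_metric d) (hB : borel_regular d mu).
Hypotheses (hfin : forall x r, (mu (cball d x r) < +oo)%E) (hsupp : full_support d mu).
Variables (R0 D : R).
Hypotheses (R0_ge1 : 1 <= R0) (D_ge1 : 1 <= D).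
(* The factor 5 R0 covers both comparisons used below: B(y, rho + 1/2) with
   B(z, 1/2) for d y z <= rho, and B(y, 2 rho) with B(y, rho). *)
Hypothesis hD : forall x r s, 0 < r -> r <= R0 -> s <= 5 * R0 * r ->
  (mu (cball d x s) <= D%:E * mu (cball d x r))%E.
Variables (th K2 : R) (S : set X).
Hypotheses (th_ge0 : 0 <= th) (K2_ge0 : 0 <= K2).
Hypothesis hup : forall x r, S x -> 0 < r -> r <= 1 ->
  (Hmeas d mu th (cball d x r `&` S)
     <= K2%:E * (mu (cball d x r) * (powR r (- th))%:E))%E.

(* A maximal 1-separated subset of B(y, rho) has at most D points, and the unit
   balls around them cover B(y, rho). *)
Lemma Hmeas_cball_le_packing y rho : S y -> 1 <= rho -> rho <= R0 ->
  (Hmeas d mu th (cball d y rho `&` S) <= (D ^+ 2 * K2)%:E * mu (cball d y rho))%E.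
Proof.
move=> Sy rho1 rhoR0; set A := cball d y rho `&` S.
have card f n : (forall l, (l < n)%N -> A (f l)) -> dist_separated d 1 f n -> n%:R <= D.
  move=> fA; apply: (separated_card_le hmet hB hfin hsupp (rho := rho) (y := y) ltr01)
    => [|z yz|l /fA [yl _] //]; first lra.
  have sub : cball d y (rho + 1 / 2) `<=` cball d z (2 * rho + 1 / 2).
    by apply: (cball_sub hmet); rewrite (distC hmet); lra.
  by apply: le_trans (le_outer_measure mu _ _ sub) _; apply: hD; lra.
have [f [n [fA fsep fnet]]] := maximal_separated_net card.
have cover : A `<=` [set z | exists2 l, (l < n)%N & (cball d (f l) 1 `&` S) z].
  by move=> z Az; have [l ln fz] := fnet z Az; exists l => //; split => //; case: Az.
apply: le_trans (Hmeas_cover_le d mu th cover) _.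
set m := fine (mu (cball d y rho)).
have each l : (l < n)%N ->
    (Hmeas d mu th (cball d (f l) 1 `&` S) <= (K2 * (D * m))%:E)%E.
  move=> ln; have [yf Sf] := fA l ln.
  apply: le_trans (hup Sf ltr01 (lexx 1)) _.
  rewrite powR1 mule1 EFinM lee_wpmul2l ?lee_fin //.
  have sub : cball d (f l) 1 `<=` cball d y (2 * rho).
    by apply: (cball_sub hmet); move: yf; rewrite /cball /=; lra.
  apply: le_trans (le_outer_measure mu _ _ sub) _.
  by rewrite EFinM -mu_cballE //; apply: hD; nra.
apply: (@le_trans _ _ (\sum_(l < n) (K2 * (D * m))%:E)%E).
  by apply: lee_sum => l _; exact: each.
rewrite sumEFin sumr_const card_ord mu_cballE // -/m -EFinM lee_fin -mulr_natr.
have m0 : 0 <= m by apply: fine_ge0; exact: outer_measure_ge0.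
have KDm : 0 <= K2 * D * m by rewrite !mulr_ge0 // (le_trans ler01 D_ge1).
by have := card f n fA fsep; rewrite expr2; nra.
Qed.

Lemma Hmeas_cball_le y rho : S y -> 0 < rho -> rho <= R0 ->
  (Hmeas d mu th (cball d y rho `&` S)
     <= (D ^+ 2 * K2 * powR R0 th)%:E * (mu (cball d y rho) * (powR rho (- th))%:E))%E.
Proof.
move=> Sy rho0 rhoR0.
have D2 : 1 <= D ^+ 2 by rewrite exprn_ege1.
have R0th : 1 <= powR R0 th by rewrite -(powRr0 R0) ler_powR.
case: (lerP rho 1) => [rho1|rho1].
  apply: le_trans (hup Sy rho0 rho1) _.
  rewrite lee_wpmul2r ?mule_ge0 ?outer_measure_ge0 ?lee_fin ?powR_ge0 //.
  rewrite (le_trans (ler_peMl K2_ge0 D2)) // ler_peMr //.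
  by rewrite mulr_ge0 // (le_trans ler01 D2).
apply: le_trans (Hmeas_cball_le_packing Sy (ltW rho1) rhoR0) _.
rewrite mu_cballE // -!EFinM lee_fin.
have ratio : 1 <= powR R0 th * powR rho (- th).
  rewrite powRN ler_pdivlMr ?powR_gt0 // mul1r.
  by apply: ge0_ler_powR => //; rewrite nnegrE; lra.
rewrite [X in _ <= X](_ : _ = D ^+ 2 * K2 * fine (mu (cball d y rho))
                              * (powR R0 th * powR rho (- th))); last by ring.
by rewrite ler_peMr // !mulr_ge0 ?fine_ge0 ?outer_measure_ge0 ?(le_trans ler01 D_ge1).
Qed.

End ADRUpperExtension.

Lemma powR_dyadic_weight (R : realType) (k : nat) (th a : R) :
  powR 2 (k%:R * (th - a)) * powR (2 ^- k) (- a) = powR 2 (k%:R * th).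
Proof.
rewrite -(@powR_invn _ 2 k) ?ler0n // -powRrM -powRD; last by rewrite pnatr_eq0 implybT.
by congr powR; ring.
Qed.

Lemma dyadic_radius_gt0 (R : realType) (k : nat) : 0 < (2 : R) ^- k.
Proof. by rewrite invr_gt0 exprn_gt0. Qed.

Lemma dyadic_radius_le1 (R : realType) (k : nat) : (2 : R) ^- k <= 1.
Proof. by rewrite invf_le1 ?exprn_gt0 // exprn_ege1 // ler1n. Qed.

Section WeightedMeasure.
Variables (R : realType) (X : pointedType) (d : X -> X -> R).
Variable mu : {outer_measure set X -> \bar R}.

Lemma mk_ge_term N th thi S k E i : (i < N)%N ->
  ((powR 2 (k%:R * (th - thi i)))%:E * Hmeas d mu (thi i) (E `&` S i)
     <= mk d mu N th thi S k E)%E.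
Proof.
move=> iN; rewrite /mk (bigD1 (Ordinal iN)) //= leeDl // sume_ge0 // => j _.
by rewrite mule_ge0 ?lee_fin ?powR_ge0 ?Hmeas_ge0.
Qed.

Hypotheses (hmet : is_metric d) (hB : borel_regular d mu).
Hypotheses (hfin : forall x r, (mu (cball d x r) < +oo)%E) (hsupp : full_support d mu).

Lemma weighted_Hmeas_cball_ge th thi K1 K2 Si k x :
  ADR_bounds d mu thi K1 K2 Si -> Si x ->
  ((K1 * fine (mu (cball d x (2 ^- k))) * powR 2 (k%:R * th))%:E
     <= (powR 2 (k%:R * (th - thi)))%:E * Hmeas d mu thi (cball d x (2 ^- k) `&` Si))%E.
Proof.
move=> hb Sx; have [lo _] := hb x _ Sx (dyadic_radius_gt0 R k) (dyadic_radius_le1 R k).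
have W0 : (0 <= (powR 2 (k%:R * (th - thi)))%:E)%E by rewrite lee_fin powR_ge0.
apply: le_trans (lee_wpmul2l W0 lo).
rewrite (mu_cballE hfin) -!EFinM lee_fin -(powR_dyadic_weight k th thi).
by rewrite le_eqVlt; apply/orP; left; apply/eqP; ring.
Qed.

Variables (c D : R).
Hypotheses (c_ge1 : 1 <= c) (D_ge1 : 1 <= D).
Hypothesis hD : forall x r s, 0 < r -> r <= 2 * c -> s <= 5 * (2 * c) * r ->
  (mu (cball d x s) <= D%:E * mu (cball d x r))%E.

(* Any point y of Sj near xu gives B(xu, c r) in B(y, 2 c r) in B(x, 4 c r). *)
Lemma weighted_Hmeas_cball_le th thj K1 K2 Sj k x xu :
  0 <= thj -> 0 <= K2 -> ADR_bounds d mu thj K1 K2 Sj -> d xu x <= c * 2 ^- k ->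
  ((powR 2 (k%:R * (th - thj)))%:E * Hmeas d mu thj (cball d xu (c * 2 ^- k) `&` Sj)
     <= (D ^+ 3 * K2 * powR (2 * c) thj * fine (mu (cball d x (2 ^- k)))
         * powR 2 (k%:R * th))%:E)%E.
Proof.
move=> thj0 K20 hb xux.
have r0 := dyadic_radius_gt0 R k; have r1 := dyadic_radius_le1 R k.
(* lra does not use section hypotheses, so c_ge1 is copied into the context. *)
have c1 := c_ge1; have D0 : 0 <= D by apply: le_trans D_ge1.
set W := powR 2 (k%:R * (th - thj)); have W0 : 0 <= W by apply: powR_ge0.
have mx0 : 0 <= fine (mu (cball d x (2 ^- k))) by rewrite fine_ge0 ?outer_measure_ge0.
case: (eqVneq (cball d xu (c * 2 ^- k) `&` Sj) set0) => [->|/set0P [y [xuy Sy]]].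
  by rewrite Hmeas0 mule0 lee_fin !mulr_ge0 ?powR_ge0 ?exprn_ge0.
have sub_y : cball d xu (c * 2 ^- k) `<=` cball d y (2 * c * 2 ^- k).
  by apply: (cball_sub hmet); move: xuy; rewrite /cball /= (distC hmet); lra.
have sub_x : cball d y (2 * c * 2 ^- k) `<=` cball d x (4 * c * 2 ^- k).
  apply: (cball_sub hmet); have := dist_triangle hmet x xu y.
  by rewrite (distC hmet x xu); move: xuy; rewrite /cball /=; lra.
have c2 : 1 <= 2 * c by lra.
have rho0 : 0 < 2 * c * 2 ^- k by rewrite !mulr_gt0 //; lra.
have rho_le : 2 * c * 2 ^- k <= 2 * c by rewrite ler_piMr //; lra.
have Hy := Hmeas_cball_le hmet hB hfin hsupp c2 D_ge1 hD thj0 K20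
  (fun z t Sz t0 t1 => (hb z t Sz t0 t1).2) Sy rho0 rho_le.
have mu_y :
    fine (mu (cball d y (2 * c * 2 ^- k))) <= D * fine (mu (cball d x (2 ^- k))).
  rewrite -lee_fin EFinM -!(mu_cballE hfin).
  by apply: le_trans (le_outer_measure mu _ _ sub_x) _; apply: hD => //; nra.
have pw : powR (2 * c * 2 ^- k) (- thj) <= powR (2 ^- k) (- thj).
  rewrite !powRN lef_pV2 ?posrE ?powR_gt0 //.
  by apply: ge0_ler_powR; rewrite ?nnegrE; nra.
have W0E : (0 <= W%:E)%E by rewrite lee_fin.
have Hxu := le_trans (le_Hmeas d mu thj (setSI (C := Sj) sub_y)) Hy.
apply: le_trans (lee_wpmul2l W0E Hxu) _.
rewrite (mu_cballE hfin y) -!EFinM lee_fin -(powR_dyadic_weight k th thj) -/W.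
set A := D ^+ 2 * K2 * powR (2 * c) thj.
have A0 : 0 <= A by rewrite !mulr_ge0 ?powR_ge0 ?exprn_ge0.
rewrite [leRHS](_ : _ = W * (A * (D * fine (mu (cball d x (2 ^- k)))
                                     * powR (2 ^- k) (- thj)))); last by rewrite /A; ring.
rewrite ler_wpM2l // ler_wpM2l // ler_pM ?fine_ge0 ?outer_measure_ge0 ?powR_ge0 //.
Qed.

Lemma mk_cball_le N th thi S K1 K2 k x xu :
  (forall j, (j < N)%N -> 0 <= thi j) -> 0 <= K2 ->
  (forall j, (j < N)%N -> ADR_bounds d mu (thi j) K1 K2 (S j)) ->
  d xu x <= c * 2 ^- k ->
  (mk d mu N th thi S k (cball d xu (c * 2 ^- k))
     <= ((\sum_(j < N) D ^+ 3 * K2 * powR (2 * c) (thi j))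
          * fine (mu (cball d x (2 ^- k))) * powR 2 (k%:R * th))%:E)%E.
Proof.
move=> thi0 K20 hb xux; rewrite /mk !mulr_suml -sumEFin.
by apply: lee_sum => j _; apply: weighted_Hmeas_cball_le; [exact: thi0 | | exact: hb | ].
Qed.

Lemma mk_cball_le_Hmeas N th thi S K1 K2 :
  (forall j, (j < N)%N -> 0 <= thi j) -> 0 < K1 -> 0 <= K2 ->
  (forall j, (j < N)%N -> ADR_bounds d mu (thi j) K1 K2 (S j)) ->
  exists2 C, 0 < C & forall i k x xu, (i < N)%N -> S i x -> d xu x <= c * 2 ^- k ->
    (mk d mu N th thi S k (cball d xu (c * 2 ^- k))
       <= (C * powR 2 (k%:R * (th - thi i)))%:E
          * Hmeas d mu (thi i) (cball d x (2 ^- k) `&` S i))%E.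
Proof.
move=> thi0 K1_gt0 K20 hb.
set A := \sum_(j < N) D ^+ 3 * K2 * powR (2 * c) (thi j).
have A0 : 0 <= A.
  rewrite sumr_ge0 // => j _.
  by rewrite !mulr_ge0 ?powR_ge0 ?exprn_ge0 ?(le_trans ler01 D_ge1).
have C_gt0 : 0 < A / K1 + 1 by have := divr_ge0 A0 (ltW K1_gt0); lra.
exists (A / K1 + 1) => // i k x xu iN Sx xux.
apply: le_trans (mk_cball_le th thi0 K20 hb xux) _.
rewrite -/A [in X in (_ <= X)%E]EFinM -muleA.
have C0 : (0 <= (A / K1 + 1)%:E)%E by rewrite lee_fin ltW.
apply: le_trans (lee_wpmul2l C0 (weighted_Hmeas_cball_ge th k (hb i iN) Sx)).
rewrite -EFinM lee_fin.
set m := fine (mu (cball d x (2 ^- k))); set T := powR 2 (k%:R * th).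
have m0 : 0 <= m by rewrite fine_ge0 ?outer_measure_ge0.
have T0 : 0 <= T by rewrite powR_ge0.
rewrite (_ : (A / K1 + 1) * (K1 * m * T) = A * m * T + K1 * m * T); last first.
  by field; rewrite gt_eqF.
by rewrite lerDl !mulr_ge0 // ltW.
Qed.

End WeightedMeasure.

Theorem proposition3p2 (R : realType) (X : pointedType) (d : X -> X -> R)
  (mu : {outer_measure set X -> \bar R}) (p : R)
  (theta_u theta : R) (N : nat) (thi : nat -> R) (S : nat -> set X) :
  standing_assumptions d mu ->
  1 < p -> poincare d mu p ->
  0 <= theta_u -> theta_u < p -> (theta_u%:E < Q_mu d mu)%E ->
  theta_u <= theta -> theta < p ->
  (2 <= N)%N ->
  0 <= thi 0%N ->
  (forall i, (i.+1 < N)%N -> thi i < thi i.+1) ->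
  thi N.-1 = theta_u ->
  (forall i, (i < N)%N -> ADR d mu (thi i) (S i)) ->
  forall c : R, 1 <= c ->
  exists C : R, 0 < C /\
    forall (i k : nat) (xu x : X), (i < N)%N -> S i x ->
      cball d x (2 ^- k) `<=` cball d xu (c * 2 ^- k) ->
      ((powR 2 (k%:R * (theta - thi i)))%:E
          * Hmeas d mu (thi i) (cball d xu (c * 2 ^- k) `&` S i)
        <= mk d mu N theta thi S k (cball d xu (c * 2 ^- k))
       /\ mk d mu N theta thi S k (cball d xu (c * 2 ^- k))
        <= (C * powR 2 (k%:R * (theta - thi i)))%:E
          * Hmeas d mu (thi i) (cball d x (2 ^- k) `&` S i))%E.
Proof.
move=> [hmet _ _ hB [hlf hsupp hdbl]] _ _ _ _ _ _ _ _ thi0 thi_lt _ hadr c c1.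
have hfin := cball_fin hdbl hlf.
have thi_ge0 j : (j < N)%N -> 0 <= thi j.
  by elim: j => [|j IH] jN //; have := thi_lt j jN; have := IH (ltnW jN); lra.
have [K1 [K2 [K1_gt0 K2_ge0 hK]]] := ADR_uniform hadr.
have c2 : 0 < 2 * c by lra.
have [D D1 hD] := doubling_scale hdbl (5 * (2 * c)) c2.
have [C C_gt0 hC] :=
  mk_cball_le_Hmeas hmet hB hfin hsupp c1 D1 hD theta thi_ge0 K1_gt0 K2_ge0 hK.
exists C; split => // i k xu x iN Sx hsub; split; first exact: mk_ge_term.
apply: hC => //.
exact: hsub (cball_center hmet x (ltW (dyadic_radius_gt0 R k))).
Qed.
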